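(* Losanitsch's triangle $(L(n,k))_{n,k\ge0}$ has the property that for each $k\ge 0$ its $k$-th column $(L(n,k))_{n\ge0}$ equals either $(e(n,k))_{n\ge 0}$ or $(o(n,k))_{n\ge0}$, and $L(n,n)=1$ for all $n\ge 0$; moreover it is the unique matrix $(a(n,k))_{n,k\ge0}$ with these two properties.
   Context: $e(n,k)$ (resp. $o(n,k)$) is the number of $k$-element subsets of $\{1,\dots,n\}$ whose sum of elements is even (resp. odd); the empty set counts as even. Losanitsch's triangle $(L(n,k))_{n,k\ge 0}$ is defined by $L(0,k)=[k=0]$, $L(1,k)=[k\le 1]$ for $k\ge0$, $L(n,k)=0$ for $k<0$, and for $n\ge 2$ and all $k$: $L(n,k)=L(n-2,k)+\binom{n-2}{k-1}+L(n-2,k-2)$, where $\binom{m}{j}=0$ for $j<0$ or $j>m$. *)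

From mathcomp Require Import all_boot.
Set Implicit Arguments. Unset Strict Implicit. Unset Printing Implicit Defensive.

(* Sum of the elements of A, viewing i : 'I_n as the integer i+1 in {1,...,n}. *)
Definition elt_sum (n : nat) (A : {set 'I_n}) : nat := \sum_(i in A) i.+1.

Definition e_cnt (n k : nat) : nat :=
  #|[set A : {set 'I_n} | (#|A| == k) && ~~ odd (elt_sum A)]|.

Definition o_cnt (n k : nat) : nat :=
  #|[set A : {set 'I_n} | (#|A| == k) && odd (elt_sum A)]|.

(* Losanitsch's triangle; L(n, k) = 0 for k < 0 and binom(m, j) = 0 for j < 0
   are encoded by the matches on k. *)
Fixpoint Los (n k : nat) {struct n} : nat :=
  match n with
  | 0 => (k == 0 : nat)
  | 1 => (k <= 1 : nat)
  | m.+2 => Los m k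
            + (if k is k'.+1 then 'C(m, k') else 0)
            + (if k is k'.+2 then Los m k' else 0)
  end.

From mathcomp Require Import all_boot.
Set Implicit Arguments. Unset Strict Implicit. Unset Printing Implicit Defensive.

(* Let c(n,k,p) count the k-subsets of {1..n} whose sum has parity p.  Splitting
   off the element n+1 gives c(n+1,k,p) = c(n,k,p) + c(n,k-1,p+n+1), while
   c(n,k,0) + c(n,k,1) = C(n,k).  Applying the first identity twice, the two
   middle terms have opposite parities (n+1 and n+2 do) and add up to C(n,k-1):
   c(n+2,k,p) = c(n,k,p) + C(n,k-1) + c(n,k-2,1-p).  This is Losanitsch's
   recurrence along the column parity p_k = k(k+1)/2 mod 2, which flips from
   k-2 to k.  Finally {1..k} is the only k-subset of itself, so c(k,k,p) = 1
   exactly when p = p_k: this gives L(k,k) = 1 and forces any column of a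
   matrix with unit diagonal to be the one of parity p_k. *)

Definition parity_count (n k : nat) (p : bool) : nat :=
  #|[set A : {set 'I_n} | (#|A| == k) && (odd (elt_sum A) == p)]|.

Lemma e_cntE n k : e_cnt n k = parity_count n k false.
Proof. by apply: eq_card => A; rewrite !inE; case: odd. Qed.

Lemma o_cntE n k : o_cnt n k = parity_count n k true.
Proof. by apply: eq_card => A; rewrite !inE; case: odd. Qed.

Lemma parity_count_complement n k p :
  parity_count n k p + parity_count n k (~~ p) = 'C(n, k).
Proof.
rewrite -[n in 'C(n, _)]card_ord -card_draws.
rewrite -(cardsID [set A : {set 'I_n} | odd (elt_sum A)]).
by case: p; [|rewrite addnC]; congr (_ + _); apply: eq_card => A;
  rewrite !inE; case: odd; rewrite ?andbT ?andbF.
Qed.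

Lemma parity_count_small n k p : n < k -> parity_count n k p = 0.
Proof.
move=> lt_nk; apply/eqP; rewrite -leqn0 -(bin_small lt_nk).
by rewrite -(parity_count_complement n k p) leq_addr.
Qed.

Lemma parity_count_0 n p : parity_count n 0 p = ~~ p.
Proof.
rewrite /parity_count.
have -> : [set A : {set 'I_n} | (#|A| == 0) && (odd (elt_sum A) == p)]
        = if p then set0 else [set set0].
  apply/setP => A; rewrite !inE cards_eq0.
  have [->|nzA] := eqVneq A set0; last by case: p; rewrite ?inE ?(negbTE nzA).
  by rewrite /elt_sum big_set0; case: p; rewrite ?inE ?eqxx.
by case: p; rewrite ?cards0 ?cards1.
Qed.

Definition tri_parity (k : nat) : bool := odd 'C(k.+1, 2).

Lemma elt_sum_setT n : elt_sum [set: 'I_n] = 'C(n.+1, 2).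
Proof.
rewrite /elt_sum -bin2_sum big_mkord big_ord_recl /=.
by apply: eq_bigl => i; rewrite inE.
Qed.

Lemma parity_count_diag n p : parity_count n n p = (p == tri_parity n).
Proof.
rewrite /parity_count.
have -> : [set A : {set 'I_n} | (#|A| == n) && (odd (elt_sum A) == p)]
        = if p == tri_parity n then [set setT] else set0.
  apply/setP => A; rewrite !inE.
  have -> : (#|A| == n) = (A == setT).
    rewrite eqEcard subsetT cardsT card_ord eqn_leq.
    by rewrite -[n in #|A| <= n]card_ord max_card.
  have [->|ntA] := eqVneq A setT; last by case: ifP; rewrite ?inE ?(negbTE ntA).
  by rewrite elt_sum_setT -/(tri_parity n) eq_sym; case: ifP; rewrite ?inE ?eqxx.
by case: eqP; rewrite ?cards0 ?cards1.
Qed.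

Section SplitMax.
Variable n : nat.

Definition join_max (B : {set 'I_n}) (b : bool) : {set 'I_n.+1} :=
  (if b then [set ord_max] else set0) :|: lift ord_max @: B.

Definition split_max (A : {set 'I_n.+1}) : {set 'I_n} * bool :=
  ([set i | lift ord_max i \in A], ord_max \in A).

Lemma ord_max_notin_lift (B : {set 'I_n}) : ord_max \notin lift ord_max @: B.
Proof. by apply/imsetP => -[i _ /eqP]; rewrite (negbTE (neq_lift _ _)). Qed.

Lemma join_maxK : cancel (fun x => join_max x.1 x.2) split_max.
Proof.
move=> [B b]; rewrite /split_max /join_max /=; congr pair.
  apply/setP => i; rewrite !inE mem_imset ?orbT; last exact: lift_inj.
  by case: b; rewrite ?inE // eq_sym (negbTE (neq_lift _ _)).
rewrite !inE (negbTE (ord_max_notin_lift B)) orbF.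
by case: b; rewrite ?in_set1 ?in_set0 ?eqxx.
Qed.

Lemma split_maxK : cancel split_max (fun x => join_max x.1 x.2).
Proof.
move=> A; apply/setP => x; rewrite /split_max /join_max /= !inE.
case: (unliftP ord_max x) => [j ->|->].
  rewrite mem_imset ?inE; last exact: lift_inj.
  by case: ifP; rewrite ?inE ?orbT // eq_sym (negbTE (neq_lift _ _)).
by rewrite (negbTE (ord_max_notin_lift _)) orbF; case: ifP; rewrite ?inE ?eqxx.
Qed.

Lemma card_join_max (B : {set 'I_n}) (b : bool) : #|join_max B b| = b + #|B|.
Proof.
rewrite /join_max.
by case: b; rewrite ?set0U ?cardsU1 ?ord_max_notin_lift card_imset //; exact: lift_inj.
Qed.

Lemma elt_sum_join_max (B : {set 'I_n}) (b : bool) :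
  elt_sum (join_max B b) = b * n.+1 + elt_sum B.
Proof.
have sum_lift : elt_sum (lift ord_max @: B) = elt_sum B.
  rewrite /elt_sum big_imset; last by move=> i j _ _; exact: lift_inj.
  by apply: eq_bigr => i _; rewrite lift_max.
rewrite /join_max; case: b; last by rewrite set0U sum_lift.
by rewrite /elt_sum big_setU1 ?ord_max_notin_lift //= -/(elt_sum _) sum_lift mul1n.
Qed.

Lemma join_max_bij : bijective (fun x => join_max x.1 x.2).
Proof. exact: Bijective join_maxK split_maxK. Qed.

End SplitMax.

Lemma parity_countS n k p :
  parity_count n.+1 k p
  = parity_count n k p + (if k is k'.+1 then parity_count n k' (p (+) odd n.+1) else 0).
Proof.
rewrite /parity_count -!sum1dep_card (reindex _ (onW_bij _ (join_max_bij n))).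
rewrite big_mkcond -(pair_bigA _ (fun B b =>
  ((#|join_max B b| == k) && (odd (elt_sum (join_max B b)) == p) : nat))).
under eq_bigr => B _ do
  rewrite big_bool !card_join_max !elt_sum_join_max mul1n mul0n add1n !add0n.
rewrite big_split [RHS]addnC; congr (_ + _); last by rewrite [RHS]big_mkcond.
case: k => [|k]; first by rewrite big1.
rewrite -sum1dep_card [RHS]big_mkcond; apply: eq_bigr => B _.
rewrite eqSS oddD.
by case: (_ == k); case: (odd n.+1); case: (odd (elt_sum B)); case: p.
Qed.

Lemma parity_countSS m k p :
  parity_count m.+2 k.+1 p
  = parity_count m k.+1 p + 'C(m, k)
    + (if k is k'.+1 then parity_count m k' (~~ p) else 0).
Proof.
rewrite !parity_countS -!addnA; congr (_ + _); rewrite addnA; congr (_ + _).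
  by rewrite [odd m.+2]/= addbN parity_count_complement.
by case: k => [|k] //=; case: (odd m); case: p.
Qed.

Lemma tri_paritySS k : tri_parity k.+2 = ~~ tri_parity k.
Proof.
rewrite /tri_parity binS bin1 binS bin1 -addnA oddD [odd (_ + _)]oddD /=.
by case: odd; case: odd.
Qed.

Lemma Los_parity_count n k : Los n k = parity_count n k (tri_parity k).
Proof.
elim/ltn_ind: n k => -[|[|m]] IH k.
- case: k => [|k]; first by rewrite parity_count_0.
  by rewrite parity_count_small.
- case: k => [|[|k]]; first by rewrite parity_count_0.
    by rewrite parity_count_diag eqxx.
  by rewrite parity_count_small.
- case: k => [|k]; first by rewrite [Los _ _]/= !addn0 IH // !parity_count_0.
  rewrite parity_countSS [Los _ _]/= IH //; case: k => [|k] //.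
  by rewrite IH // tri_paritySS negbK.
Qed.

Lemma parity_columnP (c : nat -> nat) k :
  (forall n, c n = e_cnt n k) \/ (forall n, c n = o_cnt n k)
  <-> exists p, forall n, c n = parity_count n k p.
Proof.
split=> [[c_e | c_o] | [[] c_p]].
- by exists false => n; rewrite c_e e_cntE.
- by exists true => n; rewrite c_o o_cntE.
- by right=> n; rewrite c_p o_cntE.
- by left=> n; rewrite c_p e_cntE.
Qed.

Theorem proposition3p1 :
  ((forall k, (forall n, Los n k = e_cnt n k) \/ (forall n, Los n k = o_cnt n k))
   /\ (forall n, Los n n = 1))
  /\
  (forall a : nat -> nat -> nat,
     (forall k, (forall n, a n k = e_cnt n k) \/ (forall n, a n k = o_cnt n k)) ->
     (forall n, a n n = 1) ->
     forall n k, a n k = Los n k).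
Proof.
split.
  split=> [k | n]; last by rewrite Los_parity_count parity_count_diag eqxx.
  apply/(parity_columnP (Los^~ k)); exists (tri_parity k) => n.
  exact: Los_parity_count.
move=> a a_col a_diag n k.
have [p a_p] := (parity_columnP (a^~ k) k).1 (a_col k).
move: (a_diag k); rewrite a_p parity_count_diag.
by case: eqP => // p_tri; rewrite a_p p_tri Los_parity_count.
Qed.
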